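(* Let $n\ge2$, $q_1,q_2\in\mathbb{C}$ with $q_1q_2\ne0$ and $q_1\ne q_2$, and $q=-q_2/q_1$. Let $J=\mathrm{diag}(1,q,\dots,q^{n-1})$ and, for $1\le i\le n-1$, $S_i=\frac{1}{q_1-q_2}\bigl(2\beta_i-(q_1+q_2)I_n\bigr)$, where $\beta_i$ is the matrix of $T_i$ on $\mathbf{E}$. Then $S_i^{\mathsf T}JS_i=J$ (so $S_i$ preserves the form $\langle-,-\rangle$). Moreover, with $f_0=e_1+\cdots+e_n$, $f_i=q_2e_i+q_1e_{i+1}$ and $\mathbf{L}^\perp=\{v\in\mathbf{E}:\langle v,f_0\rangle=0\}$, for each $i=1,\dots,n-1$: (a) $S_if_0=f_0$; (b) $f_i\in\mathbf{L}^\perp$; (c) $\mathbf{L}^\perp$ is an $H_n(q_1,q_2)$-submodule of $\mathbf{E}$; (d) $\mathbf{F}=\mathbf{L}^\perp$, where $\mathbf{F}=\mathrm{span}(f_1,\dots,f_{n-1})$.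
   Context: The Iwahori--Hecke algebra $H_n(q_1,q_2)$ is generated by $T_1,\dots,T_{n-1}$ subject to $T_iT_{i+1}T_i=T_{i+1}T_iT_{i+1}$, $T_iT_j=T_jT_i$ ($|i-j|>1$) and $(T_i-q_1)(T_i-q_2)=0$. It acts on $\mathbf{E}=\mathbb{C}^n$ (basis $e_1,\dots,e_n$) by $T_ie_j=q_1e_j$ ($j\ne i,i+1$), $T_ie_{i+1}=-q_2e_i$, $T_ie_i=(q_1+q_2)e_i+q_1e_{i+1}$ (generalized Burau representation). The symmetric bilinear form on $\mathbf{E}$ is $\langle e_i,e_j\rangle=\delta_{ij}q^{j-1}$, with Gram matrix $J$. *)

From HB Require Import structures.
From mathcomp Require Import all_boot all_order all_algebra.
From mathcomp Require Import reals.
From mathcomp Require Import complex.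
Set Implicit Arguments. Unset Strict Implicit. Unset Printing Implicit Defensive.
Import Order.TTheory GRing.Theory Num.Theory.
Local Open Scope ring_scope.

Section Burau.
Variables (R : realType).
Local Notation C := R[i].
Variables (q1 q2 : C) (n : nat).

(* Indices are 0-based: basis vector e_{k+1} of the paper is the k-th
   standard column vector, and generator T_{i+1} of the paper is
   [burau i] for i < n-1. *)

(* matrix beta_i of T_i on E = C^n, in the column convention:
   column c holds the coordinates of T_i e_c. *)
Definition burau (i : nat) : 'M[C]_n :=
  \matrix_(r, c)
    if (c == i :> nat) then
      (if (r == i :> nat) then q1 + q2 else if (r == i.+1 :> nat) then q1 else 0)
    else if (c == i.+1 :> nat) then
      (if (r == i :> nat) then - q2 else 0)
    else (if r == c then q1 else 0).

Definition qpar : C := - q2 / q1.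

Definition Jmat : 'M[C]_n := diag_mx (\row_(j < n) qpar ^+ j).

Definition form (v w : 'cV[C]_n) : C := (v^T *m Jmat *m w) ord0 ord0.

Definition Smat (i : nat) : 'M[C]_n :=
  (q1 - q2)^-1 *: (2%:R *: burau i - (q1 + q2) *: 1%:M).

Definition f0 : 'cV[C]_n := const_mx 1.

(* f_{i+1} = q2 e_{i+1} + q1 e_{i+2} (paper indexing), 0-based here *)
Definition fvec (i : nat) : 'cV[C]_n :=
  \col_(r < n) (if (r == i :> nat) then q2 else if (r == i.+1 :> nat) then q1 else 0).

Definition Lperp (v : 'cV[C]_n) : Prop := form v f0 = 0.

End Burau.

(* The generator acts by the rank-one perturbation beta_i = q1 + f_i (e_i - e_{i+1})^T,
   and since q1 q = -q2 the Gram matrix sends f_i to q2 q^i (e_i - e_{i+1}).  Hence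
   S_i = 1 + 2/(q1 - q2) f_i (e_i - e_{i+1})^T is the orthogonal reflection
   v |-> v - 2 <v, f_i>/<f_i, f_i> f_i of the symmetric form: it is an isometry and
   fixes f_0, which is orthogonal to f_i.  The same description shows that the
   functional <-, f_0> is an eigenvector of beta_i^T, so L^perp is stable.  Finally J
   maps L^perp onto the hyperplane of coordinate sum zero, spanned by the simple roots
   e_k - e_{k+1} with partial sums as coefficients, and maps each f_k to a nonzero
   multiple of e_k - e_{k+1}. *)

From Pilot Require Import Defs.
From HB Require Import structures.
From mathcomp Require Import all_boot all_order all_algebra.
From mathcomp Require Import reals complex.
From mathcomp Require Import ring.
Import Order.TTheory GRing.Theory Num.Theory.
Local Open Scope ring_scope.

Section FormReflection.
Variables (F : fieldType) (n : nat) (J : 'M[F]_n) (f : 'cV[F]_n).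

Definition form_reflection : 'M[F]_n :=
  1%:M - (2 / (f^T *m J *m f) 0 0) *: (f *m (f^T *m J)).

Lemma form_reflection_isometry :
  J^T = J -> (f^T *m J *m f) 0 0 != 0 ->
  form_reflection^T *m J *m form_reflection = J.
Proof.
move=> J_sym c_neq0; rewrite /form_reflection.
set c := (f^T *m J *m f) 0 0; set g := f^T *m J; set a := 2 / c.
have gf : g *m f = c%:M by rewrite [LHS]mx11_scalar.
have JS : J *m (1%:M - a *: (f *m g)) = J - a *: (J *m f *m g).
  by rewrite mulmxBr mulmx1 -scalemxAr mulmxA.
have STJ : (1%:M - a *: (f *m g))^T *m J = J - a *: (J *m f *m g).
  rewrite linearB /= trmx1 linearZ /= !trmx_mul trmxK J_sym.
  by rewrite mulmxBl mul1mx -scalemxAl !mulmxA.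
have gS : g *m (1%:M - a *: (f *m g)) = - g.
  rewrite mulmxBr mulmx1 -scalemxAr mulmxA gf mul_scalar_mx scalerA.
  by rewrite /a mulfVK // scaler_nat mulr2n opprD addrA subrr add0r.
rewrite STJ mulmxBl JS -scalemxAl -[J *m f *m g *m _]mulmxA gS.
by rewrite mulmxN scalerN opprK subrK.
Qed.

Lemma form_reflection_fix (v : 'cV[F]_n) : f^T *m J *m v = 0 -> form_reflection *m v = v.
Proof.
move=> fv0; rewrite /form_reflection mulmxBl mul1mx -scalemxAl -[f *m _ *m v]mulmxA.
by rewrite fv0 mulmx0 scaler0 subr0.
Qed.

End FormReflection.

Arguments form_reflection {F n}.

Section SimpleRoots.
Variable F : pzRingType.

Definition simple_root (n k : nat) : 'cV[F]_n :=
  \col_(r < n) ((r == k :> nat)%:R - (r == k.+1 :> nat)%:R).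

Lemma simple_root_tmul n k (g : 'cV[F]_n) (k1_lt_n : (k.+1 < n)%N) :
  ((simple_root n k)^T *m g) 0 0 = g (Ordinal (ltnW k1_lt_n)) 0 - g (Ordinal k1_lt_n) 0.
Proof.
rewrite mxE; under eq_bigr do rewrite !mxE mulrBl !mulr_natl !mulrb.
rewrite sumrB -!big_mkcond /= (big_pred1 (Ordinal (ltnW k1_lt_n))) => [|r].
  by rewrite (big_pred1 (Ordinal k1_lt_n)) // => r; rewrite /= -val_eqE.
by rewrite /= -val_eqE.
Qed.

Lemma sum_eq0_simple_roots n (w : 'cV[F]_n) :
  \sum_r w r 0 = 0 -> exists c : nat -> F, w = \sum_(k < n.-1) c k *: simple_root n k.
Proof.
case: n w => [|m] w w_sum0; first by exists (fun=> 0); rewrite !flatmx0.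
pose P k := \sum_(j < k) w (inord j) 0.
have P_last : P m.+1 = 0 by rewrite -w_sum0; apply: eq_bigr => j _; rewrite inord_val.
exists (fun k => P k.+1); apply/matrixP => r z; rewrite [z]ord1 summxE.
under eq_bigr do rewrite !mxE mulrBr !mulr_natr !mulrb.
rewrite sumrB -!big_mkcond /=.
have -> : \sum_(k < m | r == k :> nat) P k.+1 = P r.+1.
  rewrite (eq_bigl (fun k : 'I_m => k == r :> nat)) => [|k]; last exact: eq_sym.
  rewrite (big_ord1_eq _ (fun k => P k.+1)); case: ltnP => // r_ge_m.
  by have /eqP -> : (r == m :> nat) by rewrite eqn_leq r_ge_m -ltnS ltn_ord.
have -> : \sum_(k < m | r == k.+1 :> nat) P k.+1 = P r.
  case: r => [[|s] s_lt] /=; first by rewrite big_pred0 // /P big_ord0.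
  rewrite (eq_bigl (fun k : 'I_m => k == s :> nat)) => [|k]; last by rewrite eqSS eq_sym.
  by rewrite (big_ord1_eq _ (fun k => P k.+1)) -ltnS s_lt.
by rewrite /P big_ord_recr /= inord_val addrC addrK.
Qed.

End SimpleRoots.

Section BurauForm.
Variables (R : realType) (q1 q2 : R[i]) (n : nat).
Hypotheses (q1_neq0 : q1 != 0) (q2_neq0 : q2 != 0).
Local Notation q := (qpar q1 q2).
Local Notation J := (Jmat q1 q2 n).
Local Notation f := (fvec q1 q2 n).
Local Notation e := (@simple_root R[i] n).
Local Notation f0 := (f0 R n).
Local Notation form := (Defs.form q1 q2).

Lemma qpar_neq0 : q != 0.
Proof. by rewrite /qpar mulf_neq0 ?oppr_eq0 ?invr_eq0. Qed.

Lemma mulr_q1_qpar : q1 * q = - q2.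
Proof. by rewrite mulrC divfK. Qed.

Lemma trmx_Jmat : J^T = J.
Proof. exact: tr_diag_mx. Qed.

Lemma Jmat_mulE (v : 'cV_n) r : (J *m v) r 0 = q ^+ r * v r 0.
Proof. by rewrite mul_diag_mx !mxE. Qed.

Lemma Jmat_inj (v w : 'cV_n) : J *m v = J *m w -> v = w.
Proof.
move=> Jvw; apply/matrixP => r z; rewrite [z]ord1.
by apply: (mulfI (expf_neq0 r qpar_neq0)); rewrite -!Jmat_mulE Jvw.
Qed.

Lemma Jmat_fvec k : J *m f k = (q2 * q ^+ k) *: e k.
Proof.
apply/matrixP => r z; rewrite [z]ord1 Jmat_mulE !mxE.
case: eqP => [->|_]; first by rewrite (ltn_eqF (ltnSn k)) subr0 mulr1 mulrC.
case: eqP => [->|_]; last by rewrite subrr !mulr0.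
by rewrite exprSr -mulrA [q * _]mulrC mulr_q1_qpar sub0r mulrN1 mulrN mulrC.
Qed.

Lemma burauE i : burau q1 q2 n i = q1 *: 1%:M + f i *m (e i)^T.
Proof.
apply/matrixP => r c; rewrite !mxE big_ord1 !mxE -val_eqE /=.
have [-> {c}|ci] := eqVneq (c : nat) i.
  rewrite (ltn_eqF (ltnSn i)) subr0 mulr1.
  by case: (r == i :> nat); case: (r == i.+1 :> nat) => /=; ring.
have [-> {c ci}|ci1] := eqVneq (c : nat) i.+1.
  rewrite sub0r mulrN1.
  have [->|ri] := eqVneq (r : nat) i; first by rewrite (ltn_eqF (ltnSn i)) mulr0 add0r.
  by case: (r == i.+1 :> nat) => /=; ring.
by rewrite subrr mulr0 addr0; case: (r == c :> nat) => /=; ring.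
Qed.

Lemma trmx_fvec_Jmat k : (f k)^T *m J = (q2 * q ^+ k) *: (e k)^T.
Proof. by rewrite -trmx_Jmat -trmx_mul Jmat_fvec linearZ. Qed.

Lemma form_fvecl k (w : 'cV_n) : form (f k) w = q2 * q ^+ k * ((e k)^T *m w) 0 0.
Proof. by rewrite /form trmx_fvec_Jmat -scalemxAl mxE. Qed.

Lemma form_fvec_f0 k : (k.+1 < n)%N -> form (f k) f0 = 0.
Proof. by move=> k1_lt_n; rewrite form_fvecl simple_root_tmul !mxE subrr mulr0. Qed.

Lemma form_fvec_fvec k : (k.+1 < n)%N -> form (f k) (f k) = q2 * q ^+ k * (q2 - q1).
Proof.
move=> k1_lt_n; rewrite form_fvecl simple_root_tmul !mxE /=.
by rewrite eqxx (gtn_eqF (ltnSn k)) eqxx.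
Qed.

Section SmatReflection.
Variable i : nat.
Hypotheses (q1_neq_q2 : q1 != q2) (i1_lt_n : (i.+1 < n)%N).

Lemma Smat_reflection : Smat q1 q2 n i = form_reflection J (f i).
Proof.
rewrite /Smat /form_reflection burauE -/(form (f i) (f i)) form_fvec_fvec //.
rewrite trmx_fvec_Jmat -scalemxAr.
have qi_neq0 : q ^+ i != 0 := expf_neq0 i qpar_neq0.
move: (f i *m _) => M.
apply/matrixP => r c; rewrite !mxE.
by field; rewrite qi_neq0 q2_neq0 !subr_eq0 eq_sym q1_neq_q2.
Qed.

Lemma Smat_isometry : (Smat q1 q2 n i)^T *m J *m Smat q1 q2 n i = J.
Proof.
rewrite Smat_reflection form_reflection_isometry ?trmx_Jmat //.
rewrite -/(form (f i) (f i)) form_fvec_fvec // !mulf_neq0 ?expf_neq0 ?qpar_neq0 //.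
by rewrite subr_eq0 eq_sym.
Qed.

Lemma Smat_f0 : Smat q1 q2 n i *m f0 = f0.
Proof.
rewrite Smat_reflection form_reflection_fix // [LHS]mx11_scalar.
by rewrite -/(form (f i) f0) form_fvec_f0 // raddf0.
Qed.

End SmatReflection.

Lemma form_burau_f0 i (v : 'cV_n) : (i.+1 < n)%N ->
  form (burau q1 q2 n i *m v) f0 = q1 * form v f0.
Proof.
move=> i1_lt_n.
have fJf0 : (f i)^T *m J *m f0 = 0.
  by rewrite [LHS]mx11_scalar -/(form (f i) f0) form_fvec_f0 // raddf0.
have burauT_Jf0 : (burau q1 q2 n i)^T *m (J *m f0) = q1 *: (J *m f0).
  rewrite burauE linearD /= linearZ /= trmx1 trmx_mul trmxK mulmxDl -scalemxAl mul1mx.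
  by rewrite -mulmxA [(f i)^T *m _]mulmxA fJf0 mulmx0 addr0.
by rewrite /form trmx_mul -!mulmxA burauT_Jf0 -scalemxAr mxE mulmxA.
Qed.

Lemma Lperp_burau i (v : 'cV_n) :
  (i.+1 < n)%N -> Lperp q1 q2 v -> Lperp q1 q2 (burau q1 q2 n i *m v).
Proof. by move=> i1_lt_n; rewrite /Lperp form_burau_f0 // => ->; rewrite mulr0. Qed.

Lemma form_f0E (v : 'cV_n) : form v f0 = \sum_r (J *m v) r 0.
Proof.
rewrite /form -{1}trmx_Jmat -trmx_mul mxE.
by apply: eq_bigr => r _; rewrite !mxE mulr1.
Qed.

Lemma Lperp_sum_fvec (c : nat -> R[i]) : Lperp q1 q2 (\sum_(k < n.-1) c k *: f k).
Proof.
rewrite /Lperp form_f0E mulmx_sumr; under eq_bigr do rewrite summxE.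
rewrite exchange_big big1 // => k _; under eq_bigr do rewrite -scalemxAr mxE.
by rewrite -mulr_sumr -form_f0E form_fvec_f0 ?mulr0 // -ltn_predRL.
Qed.

Lemma Lperp_fvec_span (v : 'cV_n) :
  Lperp q1 q2 v -> exists c : nat -> R[i], v = \sum_(k < n.-1) c k *: f k.
Proof.
rewrite /Lperp form_f0E => /sum_eq0_simple_roots [c Jv].
exists (fun k => c k / (q2 * q ^+ k)); apply: Jmat_inj; rewrite Jv mulmx_sumr.
apply: eq_bigr => k _; rewrite -scalemxAr Jmat_fvec scalerA divfK //.
by rewrite mulf_neq0 ?expf_neq0 ?qpar_neq0.
Qed.

End BurauForm.

Theorem lemma3p5 (R : realType) (n : nat) (q1 q2 : R[i]) :
  (2 <= n)%N -> q1 * q2 != 0 -> q1 != q2 ->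
  (forall i : nat, (i.+1 < n)%N ->
     (Smat q1 q2 n i)^T *m Jmat q1 q2 n *m Smat q1 q2 n i = Jmat q1 q2 n) /\
  (forall i : nat, (i.+1 < n)%N ->
     [/\ Smat q1 q2 n i *m f0 R n = f0 R n,
         Lperp q1 q2 (fvec q1 q2 n i) &
         (forall v : 'cV[R[i]]_n, Lperp q1 q2 v -> Lperp q1 q2 (burau q1 q2 n i *m v))]) /\
  (forall v : 'cV[R[i]]_n, Lperp q1 q2 v <->
     exists c : nat -> R[i], v = \sum_(k < n.-1) c k *: fvec q1 q2 n k).
Proof.
move=> _ q12_neq0 q1_neq_q2.
have /andP[q1_neq0 q2_neq0] : (q1 != 0) && (q2 != 0) by rewrite -negb_or -mulf_eq0.
split; [|split].
- by move=> i; apply: Smat_isometry.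
- move=> i i1_lt_n.
  by split; [exact: Smat_f0 | exact: form_fvec_f0 | move=> v; exact: Lperp_burau].
- move=> v; split; first exact: Lperp_fvec_span.
  by case=> c ->; apply: Lperp_sum_fvec.
Qed.
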